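(* Let $\tau$ be a typical Euclidean triangle and let $S_\tau=\langle s_1,s_2,s_3\rangle\subset \mathrm{O}(2)$ (see context). Then $S_\tau$ admits the finite presentation $\langle x_1,x_2,x_3 \mid x_1^2,\ x_2^2,\ x_3^2,\ (x_1x_2x_3)^2\rangle$, with the generator $x_i$ corresponding to $s_i$ for $i=1,2,3$.
   Context: A Euclidean triangle $\tau=A_1A_2A_3$ has edges $e_i=A_jA_k$ and interior angles $\alpha_i$ at $A_i$, $\{i,j,k\}=\{1,2,3\}$; it is typical if $\alpha_1,\alpha_2,\alpha_3$ are linearly independent over $\mathbb{Q}$. Let $r_i$ be the reflection of the plane across the line containing $e_i$, and let $s_i\in\mathrm{O}(2)$ be its linear part, i.e. the linear reflection across the line through the origin parallel to $e_i$. $S_\tau$ is the subgroup of $\mathrm{O}(2)$ generated by $s_1,s_2,s_3$. *)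

From Stdlib Require Import Reals List QArith Qreals.
Import ListNotations.
Open Scope R_scope.

Definition point := (R * R)%type.

Definition vsub (p q : point) : point := (fst p - fst q, snd p - snd q).
Definition dot (p q : point) : R := fst p * fst q + snd p * snd q.
Definition vnorm (p : point) : R := sqrt (dot p p).
Definition cross (p q : point) : R := fst p * snd q - snd p * fst q.

Inductive idx := I1 | I2 | I3.

Definition tri := idx -> point.

Definition nondegenerate (A : tri) : Prop :=
  cross (vsub (A I2) (A I1)) (vsub (A I3) (A I1)) <> 0.

Definition others (i : idx) : idx * idx :=
  match i with I1 => (I2, I3) | I2 => (I3, I1) | I3 => (I1, I2) end.

Definition angle (A : tri) (i : idx) : R :=
  let u := vsub (A (fst (others i))) (A i) in
  let v := vsub (A (snd (others i))) (A i) in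
  acos (dot u v / (vnorm u * vnorm v)).

Definition typical (A : tri) : Prop :=
  forall q1 q2 q3 : Q,
    Q2R q1 * angle A I1 + Q2R q2 * angle A I2 + Q2R q3 * angle A I3 = 0 ->
    Q2R q1 = 0 /\ Q2R q2 = 0 /\ Q2R q3 = 0.

Definition edge_dir (A : tri) (i : idx) : point :=
  vsub (A (snd (others i))) (A (fst (others i))).

Definition lin_refl (d : point) (v : point) : point :=
  let c := 2 * dot v d / dot d d in
  (c * fst d - fst v, c * snd d - snd v).

(* s_i in O(2): linear part of the reflection across the line containing e_i *)
Definition s (A : tri) (i : idx) : point -> point := lin_refl (edge_dir A i).

(* Words in the generators x_1, x_2, x_3 (each x_i is an involution in the
   presented group, so positive words suffice). *)
Definition word := list idx.

Definition eval (A : tri) (w : word) : point -> point :=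
  fold_right (fun i f => fun v => s A i (f v)) (fun v => v) w.

Definition relators : list word :=
  [ [I1; I1]; [I2; I2]; [I3; I3]; [I1; I2; I3; I1; I2; I3] ].

(* The congruence on words defining the group
   < x1, x2, x3 | x1^2, x2^2, x3^2, (x1 x2 x3)^2 >:
   equality of the images of two words in that group. *)
Inductive pres_eq : word -> word -> Prop :=
  | pres_refl w : pres_eq w w
  | pres_sym w1 w2 : pres_eq w1 w2 -> pres_eq w2 w1
  | pres_trans w1 w2 w3 : pres_eq w1 w2 -> pres_eq w2 w3 -> pres_eq w1 w3
  | pres_rel u r v : In r relators -> pres_eq (u ++ r ++ v) (u ++ v).

(* By the composition rule for two line reflections, a := s1 s2 and
   b := s2 s3 are the rotations by 2 e alpha_3 and 2 e alpha_1, where e = +-1 is the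
   orientation of the triangle.  In the presented group x1 x2 and x2 x3 commute
   (this is the relation (x1 x2 x3)^2 = 1) and x2 inverts both, so every word equals a
   normal form (x1 x2)^m (x2 x3)^n x2^p.  Its image is a rotation by
   2 e (m alpha_3 + n alpha_1), composed with s2 if p is set.  The parity p is recovered
   because a reflection is not a rotation.  Since s1 s2 . s2 s3 . s3 s1 = 1, the sum
   2 e (alpha_1 + alpha_2 + alpha_3) is a multiple k' PI of PI, with k' <> 0 by
   typicality; two normal forms with the same image thus differ by (dm, dn) with
   dm alpha_3 + dn alpha_1 a rational multiple of alpha_1 + alpha_2 + alpha_3, and
   typicality forces dm = dn = 0. *)

From Stdlib Require Import Reals List QArith Qreals Lra Lia Psatz ZArith FunctionalExtensionality.
Import ListNotations.
Open Scope R_scope.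

Definition rot (t : R) (x : point) : point :=
  (cos t * fst x - sin t * snd x, sin t * fst x + cos t * snd x).

Lemma rot0 x : rot 0 x = x.
Proof. destruct x; unfold rot; simpl. rewrite cos_0, sin_0. f_equal; ring. Qed.

Lemma rot_add a b x : rot a (rot b x) = rot (a + b) x.
Proof.
  destruct x as [p q]. unfold rot; simpl. rewrite cos_plus, sin_plus. f_equal; ring.
Qed.

Lemma sin_sub_eq0_of_rot t u : (forall x, rot t x = rot u x) -> sin (t - u) = 0.
Proof.
  intro H. specialize (H (1, 0)). unfold rot in H; simpl in H. injection H; intros.
  rewrite sin_minus. replace (cos t) with (cos u) by lra. replace (sin t) with (sin u) by lra. ring.
Qed.

Lemma lin_refl_invol d x : dot d d <> 0 -> lin_refl d (lin_refl d x) = x.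
Proof.
  destruct d as [a b], x as [p q]. unfold lin_refl, dot; simpl. intro H.
  f_equal; field; auto.
Qed.

Lemma lin_refl_rot d t x : dot d d <> 0 -> lin_refl d (rot t x) = rot (- t) (lin_refl d x).
Proof.
  destruct d as [a b], x as [p q]. unfold lin_refl, rot, dot; simpl. intro H.
  rewrite cos_neg, sin_neg. f_equal; field; auto.
Qed.

Lemma lin_refl_vsub_sym P Q x : lin_refl (vsub P Q) x = lin_refl (vsub Q P) x.
Proof.
  destruct P as [a b], Q as [c d], x; unfold lin_refl, vsub, dot; simpl.
  replace ((a - c) * (a - c) + (b - d) * (b - d)) with ((c - a) * (c - a) + (d - b) * (d - b))
    by ring.
  f_equal; unfold Rdiv; ring.
Qed.

Lemma lin_refl_neq_rot d t : dot d d <> 0 -> ~ (forall x, lin_refl d x = rot t x).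
Proof.
  destruct d as [a b]. intros Hn H.
  pose proof (H (a, b)) as E1. pose proof (H (- b, a)) as E2.
  unfold lin_refl, rot, dot in *; simpl in *.
  replace (2 * (a * a + b * b) / (a * a + b * b)) with 2 in E1 by (field; auto).
  replace (2 * (- b * a + a * b) / (a * a + b * b)) with 0 in E2 by (field; auto).
  injection E1; injection E2; intros.
  apply Hn. assert (a = 0) by lra. assert (b = 0) by lra. subst. ring.
Qed.

Definition vangle (u v : point) : R := acos (dot u v / (vnorm u * vnorm v)).

Definition sgn (r : R) : R := if Rlt_dec 0 r then 1 else -1.

Lemma lagrange_identity u v : dot u v * dot u v + cross u v * cross u v = dot u u * dot v v.
Proof. destruct u, v; unfold dot, cross; simpl; ring. Qed.

Lemma dot_self_pos_l u v : cross u v <> 0 -> 0 < dot u u.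
Proof.
  destruct u as [a b], v as [c d]; unfold dot, cross; simpl. intro H.
  destruct (Req_dec a 0), (Req_dec b 0); subst; try nra.
Qed.

Lemma dot_self_pos_r u v : cross u v <> 0 -> 0 < dot v v.
Proof.
  intro H. apply (dot_self_pos_l v u).
  destruct u, v; unfold cross in *; simpl in *; lra.
Qed.

Lemma vnorm_sqr u : vnorm u * vnorm u = dot u u.
Proof. apply sqrt_sqrt. destruct u; unfold dot; simpl; nra. Qed.

Lemma vnorm_pos u : 0 < dot u u -> 0 < vnorm u.
Proof. intro H. now apply sqrt_lt_R0. Qed.

Lemma div_vnorms_mul u v a b : 0 < dot u u -> 0 < dot v v ->
  a / (vnorm u * vnorm v) * (b / (vnorm u * vnorm v)) = a * b / (dot u u * dot v v).
Proof.
  intros Hu Hv. rewrite <- !vnorm_sqr.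
  pose proof (vnorm_pos u Hu). pose proof (vnorm_pos v Hv). field; lra.
Qed.

Lemma cos_vangle u v : cross u v <> 0 -> cos (vangle u v) = dot u v / (vnorm u * vnorm v).
Proof.
  intro H. pose proof (dot_self_pos_l u v H) as Hu. pose proof (dot_self_pos_r u v H) as Hv.
  apply cos_acos.
  set (c := dot u v / (vnorm u * vnorm v)).
  assert (Hc : c * c <= 1).
  { unfold c. rewrite div_vnorms_mul by auto.
    pose proof (lagrange_identity u v).
    apply (Rmult_le_reg_r (dot u u * dot v v)); [nra|].
    unfold Rdiv. rewrite Rmult_assoc, Rinv_l by nra. nra. }
  split; nra.
Qed.

Lemma sin_vangle u v : 0 < cross u v -> sin (vangle u v) = cross u v / (vnorm u * vnorm v).
Proof.
  intro H. assert (H0 : cross u v <> 0) by lra.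
  pose proof (dot_self_pos_l u v H0) as Hu. pose proof (dot_self_pos_r u v H0) as Hv.
  pose proof (vnorm_pos u Hu). pose proof (vnorm_pos v Hv).
  assert (Hc : -1 <= dot u v / (vnorm u * vnorm v) <= 1).
  { rewrite <- cos_vangle by auto. apply COS_bound. }
  unfold vangle. rewrite sin_acos by exact Hc.
  rewrite <- (sqrt_Rsqr (cross u v / (vnorm u * vnorm v)))
    by (apply Rlt_le, Rdiv_lt_0_compat; nra).
  f_equal. unfold Rsqr. rewrite !div_vnorms_mul by auto.
  pose proof (lagrange_identity u v). field_simplify_eq; nra.
Qed.

Lemma lin_refl_comp_pos u v x : 0 < cross u v ->
  lin_refl v (lin_refl u x) = rot (2 * vangle u v) x.
Proof.
  intro H. assert (H0 : cross u v <> 0) by lra.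
  pose proof (dot_self_pos_l u v H0) as Hu. pose proof (dot_self_pos_r u v H0) as Hv.
  assert (Hcos2 : cos (2 * vangle u v) = 2 * (dot u v * dot u v / (dot u u * dot v v)) - 1).
  { rewrite cos_2a_cos, cos_vangle, Rmult_assoc, div_vnorms_mul by auto. reflexivity. }
  assert (Hsin2 : sin (2 * vangle u v) = 2 * (cross u v * dot u v / (dot u u * dot v v))).
  { rewrite sin_2a, cos_vangle, sin_vangle, Rmult_assoc, div_vnorms_mul by auto. reflexivity. }
  unfold rot. rewrite Hcos2, Hsin2.
  destruct u as [a b], v as [c d], x as [p q]; unfold lin_refl, dot, cross in *; simpl in *.
  f_equal; field; lra.
Qed.

Lemma lin_refl_comp u v x : cross u v <> 0 ->
  lin_refl v (lin_refl u x) = rot (2 * sgn (cross u v) * vangle u v) x.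
Proof.
  intro H. unfold sgn. destruct (Rlt_dec 0 (cross u v)) as [Hpos|Hneg].
  - rewrite Rmult_1_r. now apply lin_refl_comp_pos.
  - assert (Hvu : 0 < cross v u) by (destruct u, v; unfold cross in *; simpl in *; lra).
    assert (Hsym : vangle v u = vangle u v).
    { unfold vangle. f_equal. destruct u, v; unfold dot; simpl. f_equal; ring. }
    assert (Hu : dot u u <> 0) by (pose proof (dot_self_pos_l u v H); lra).
    assert (Hv : dot v v <> 0) by (pose proof (dot_self_pos_r u v H); lra).
    rewrite <- (rot0 x) at 1.
    replace 0 with (2 * vangle v u + 2 * -1 * vangle u v) by (rewrite Hsym; ring).
    rewrite <- rot_add, <- lin_refl_comp_pos by exact Hvu.
    now rewrite lin_refl_invol, lin_refl_invol.
Qed.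

Definition orientation (A : tri) : R := sgn (cross (vsub (A I2) (A I1)) (vsub (A I3) (A I1))).

Definition turn (A : tri) (i : idx) : R := 2 * orientation A * angle A i.

Lemma cross_at_vertex A i :
  cross (vsub (A (fst (others i))) (A i)) (vsub (A (snd (others i))) (A i))
  = cross (vsub (A I2) (A I1)) (vsub (A I3) (A I1)).
Proof.
  destruct i; cbn; destruct (A I1), (A I2), (A I3); unfold cross, vsub; simpl; ring.
Qed.

Lemma s_comp A i x : nondegenerate A ->
  s A (fst (others i)) (s A (snd (others i)) x) = rot (turn A i) x.
Proof.
  intro HD. pose proof (cross_at_vertex A i) as Hc.
  unfold nondegenerate in HD. rewrite <- Hc in HD.
  unfold turn, orientation, angle, s. rewrite <- Hc.
  destruct i; cbn in *; unfold edge_dir; cbn; rewrite lin_refl_vsub_sym;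
    now apply lin_refl_comp.
Qed.

Close Scope R_scope.
Notation "u ≡ v" := (pres_eq u v) (at level 70).

Lemma pres_eq_cong p u v q : u ≡ v -> p ++ u ++ q ≡ p ++ v ++ q.
Proof.
  induction 1.
  - apply pres_refl.
  - now apply pres_sym.
  - eapply pres_trans; eauto.
  - replace (p ++ (u ++ r ++ v) ++ q) with ((p ++ u) ++ r ++ (v ++ q)) by now rewrite !app_assoc.
    replace (p ++ (u ++ v) ++ q) with ((p ++ u) ++ (v ++ q)) by now rewrite !app_assoc.
    now apply pres_rel.
Qed.

Lemma pres_eq_app_l p u v : u ≡ v -> p ++ u ≡ p ++ v.
Proof. intro H. pose proof (pres_eq_cong p u v [] H) as H'. now rewrite !app_nil_r in H'. Qed.

Lemma pres_eq_app_r u v q : u ≡ v -> u ++ q ≡ v ++ q.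
Proof. exact (pres_eq_cong [] u v q). Qed.

Lemma pres_eq_relator r : In r relators -> r ≡ [].
Proof. intro H. pose proof (pres_rel [] r [] H) as H'. now rewrite app_nil_r in H'. Qed.

Lemma pres_eq_sq i : [i; i] ≡ [].
Proof. apply pres_eq_relator. destruct i; simpl; auto. Qed.

Lemma pres_eq_cancel p i q : p ++ i :: i :: q ≡ p ++ q.
Proof. exact (pres_eq_cong p [i; i] [] q (pres_eq_sq i)). Qed.

Lemma pres_eq_insert p i q : p ++ q ≡ p ++ i :: i :: q.
Proof. apply pres_sym, pres_eq_cancel. Qed.

Ltac cancel_at p q i := first [ exact (pres_eq_cancel p i q) | exact (pres_eq_insert p i q) ].

Lemma pres_eq_321 : [I3; I2; I1] ≡ [I1; I2; I3].
Proof.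
  apply pres_trans with ([I3; I2; I1] ++ [I1; I2; I3; I1; I2; I3]).
  { rewrite <- (app_nil_r [I3; I2; I1]) at 1. apply pres_eq_app_l, pres_sym, pres_eq_relator.
    simpl; auto. }
  eapply pres_trans. { cancel_at [I3; I2] [I2; I3; I1; I2; I3] I1. }
  eapply pres_trans. { cancel_at [I3] [I3; I1; I2; I3] I2. }
  cancel_at (@nil idx) [I1; I2; I3] I3.
Qed.

Lemma pres_eq_231 : [I2; I3; I1] ≡ [I1; I3; I2].
Proof.
  eapply pres_trans. { cancel_at (@nil idx) [I2; I3; I1] I1. }
  eapply pres_trans. { exact (pres_eq_cong [I1] _ _ [I1] (pres_sym _ _ pres_eq_321)). }
  cancel_at [I1; I3; I2] (@nil idx) I1.
Qed.

Fixpoint rep (a : word) (k : nat) : word :=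
  match k with O => [] | S k => rep a k ++ a end.

(* [a'] plays the role of the inverse of [a]. *)
Definition zpow (a a' : word) (m : Z) : word :=
  if Z.leb 0 m then rep a (Z.to_nat m) else rep a' (Z.to_nat (- m)).

Lemma rep_conj a b x k : x ++ a ≡ b ++ x -> x ++ rep a k ≡ rep b k ++ x.
Proof.
  intro H. induction k as [|k IH]; simpl.
  - rewrite app_nil_r. apply pres_refl.
  - rewrite app_assoc. eapply pres_trans; [apply pres_eq_app_r, IH|].
    rewrite <- !app_assoc. now apply pres_eq_app_l.
Qed.

Lemma pres_eq_drop_inv p u v : u ++ v ≡ [] -> p ++ u ++ v ≡ p.
Proof.
  intro H. rewrite <- (app_nil_r p) at 2. now apply pres_eq_app_l.
Qed.

Section IntegerPowers.
Variables a a' : word.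
Hypothesis inv_r : a ++ a' ≡ [].
Hypothesis inv_l : a' ++ a ≡ [].

Lemma zpow_succ m : zpow a a' m ++ a ≡ zpow a a' (m + 1).
Proof.
  unfold zpow. destruct (Z.leb_spec 0 m), (Z.leb_spec 0 (m + 1)); try lia.
  - replace (Z.to_nat (m + 1)) with (S (Z.to_nat m)) by lia. apply pres_refl.
  - replace m with (-1)%Z by lia. exact inv_l.
  - replace (Z.to_nat (- m)) with (S (Z.to_nat (- (m + 1)))) by lia.
    simpl. rewrite <- app_assoc. now apply pres_eq_drop_inv.
Qed.

Lemma zpow_pred m : zpow a a' m ++ a' ≡ zpow a a' (m - 1).
Proof.
  unfold zpow. destruct (Z.leb_spec 0 m), (Z.leb_spec 0 (m - 1)); try lia.
  - replace (Z.to_nat m) with (S (Z.to_nat (m - 1))) by lia.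
    simpl. rewrite <- app_assoc. now apply pres_eq_drop_inv.
  - replace m with 0%Z by lia. apply pres_refl.
  - replace (Z.to_nat (- (m - 1))) with (S (Z.to_nat (- m))) by lia. apply pres_refl.
Qed.

Lemma zpow_add m n : zpow a a' m ++ zpow a a' n ≡ zpow a a' (m + n).
Proof.
  revert m. induction n using Z.peano_ind; intro m.
  - unfold zpow at 2. simpl. rewrite app_nil_r, Z.add_0_r. apply pres_refl.
  - apply pres_trans with (zpow a a' m ++ zpow a a' n ++ a).
    { apply pres_eq_app_l, pres_sym. rewrite <- Z.add_1_r. apply zpow_succ. }
    rewrite app_assoc. eapply pres_trans; [apply pres_eq_app_r, IHn|].
    replace (m + Z.succ n)%Z with (m + n + 1)%Z by lia. apply zpow_succ.
  - apply pres_trans with (zpow a a' m ++ zpow a a' n ++ a').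
    { apply pres_eq_app_l, pres_sym. rewrite <- Z.sub_1_r. apply zpow_pred. }
    rewrite app_assoc. eapply pres_trans; [apply pres_eq_app_r, IHn|].
    replace (m + Z.pred n)%Z with (m + n - 1)%Z by lia. apply zpow_pred.
Qed.

End IntegerPowers.

Lemma zpow_conj_inv a a' x : x ++ a ≡ a' ++ x -> x ++ a' ≡ a ++ x ->
  forall m, x ++ zpow a a' m ≡ zpow a a' (- m) ++ x.
Proof.
  intros H1 H2 m. unfold zpow. destruct (Z.leb_spec 0 m), (Z.leb_spec 0 (- m)).
  - replace m with 0%Z by lia. simpl. rewrite app_nil_r. apply pres_refl.
  - rewrite Z.opp_involutive. now apply rep_conj.
  - now apply rep_conj.
  - lia.
Qed.

Lemma zpow_comm a a' x : x ++ a ≡ a ++ x -> x ++ a' ≡ a' ++ x ->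
  forall m, x ++ zpow a a' m ≡ zpow a a' m ++ x.
Proof. intros H1 H2 m. unfold zpow. destruct (Z.leb_spec 0 m); now apply rep_conj. Qed.

Definition nf_word (m n : Z) (p : bool) : word :=
  zpow [I1; I2] [I2; I1] m ++ zpow [I2; I3] [I3; I2] n ++ (if p then [I2] else []).

Fixpoint nf_coords (w : word) : Z * Z * bool :=
  match w with
  | [] => (0%Z, 0%Z, false)
  | i :: w =>
      let '(m, n, p) := nf_coords w in
      match i with
      | I1 => ((1 - m)%Z, (- n)%Z, negb p)
      | I2 => ((- m)%Z, (- n)%Z, negb p)
      | I3 => ((- m)%Z, (-1 - n)%Z, negb p)
      end
  end.

Lemma pres_eq_inv12 : [I1; I2] ++ [I2; I1] ≡ [].
Proof. eapply pres_trans; [cancel_at [I1] [I1] I2 | apply pres_eq_sq]. Qed.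
Lemma pres_eq_inv21 : [I2; I1] ++ [I1; I2] ≡ [].
Proof. eapply pres_trans; [cancel_at [I2] [I2] I1 | apply pres_eq_sq]. Qed.
Lemma pres_eq_inv23 : [I2; I3] ++ [I3; I2] ≡ [].
Proof. eapply pres_trans; [cancel_at [I2] [I2] I3 | apply pres_eq_sq]. Qed.
Lemma pres_eq_inv32 : [I3; I2] ++ [I2; I3] ≡ [].
Proof. eapply pres_trans; [cancel_at [I3] [I3] I2 | apply pres_eq_sq]. Qed.

Lemma nf_word_x2 m n p : [I2] ++ nf_word m n p ≡ nf_word (- m) (- n) (negb p).
Proof.
  unfold nf_word. rewrite app_assoc.
  eapply pres_trans.
  { apply pres_eq_app_r, zpow_conj_inv; [apply pres_refl|].
    eapply pres_trans; [cancel_at (@nil idx) [I1] I2 | cancel_at [I1] (@nil idx) I2]. }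
  rewrite <- !app_assoc. apply pres_eq_app_l. rewrite app_assoc.
  eapply pres_trans.
  { apply pres_eq_app_r, zpow_conj_inv; [|apply pres_refl].
    eapply pres_trans; [cancel_at (@nil idx) [I3] I2 | cancel_at [I3] (@nil idx) I2]. }
  rewrite <- !app_assoc. apply pres_eq_app_l.
  destruct p; [apply pres_eq_sq | apply pres_refl].
Qed.

Lemma nf_word_x1 m n p : [I1] ++ nf_word m n p ≡ nf_word (1 - m) (- n) (negb p).
Proof.
  eapply pres_trans. { exact (pres_eq_insert [I1] I2 (nf_word m n p)). }
  eapply pres_trans. { exact (pres_eq_app_l [I1; I2] _ _ (nf_word_x2 m n p)). }
  unfold nf_word. rewrite app_assoc. apply pres_eq_app_r.
  replace (1 - m)%Z with (1 + - m)%Z by lia.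
  exact (zpow_add _ _ pres_eq_inv12 pres_eq_inv21 1 (- m)).
Qed.

Lemma nf_word_x3 m n p : [I3] ++ nf_word m n p ≡ nf_word (- m) (-1 - n) (negb p).
Proof.
  eapply pres_trans. { exact (pres_eq_insert [I3] I2 (nf_word m n p)). }
  eapply pres_trans. { exact (pres_eq_app_l [I3; I2] _ _ (nf_word_x2 m n p)). }
  unfold nf_word. rewrite app_assoc.
  eapply pres_trans.
  { apply pres_eq_app_r, zpow_comm.
    - exact (pres_eq_app_r _ _ [I2] pres_eq_321).
    - eapply pres_trans; [cancel_at [I3] [I1] I2|].
      eapply pres_trans; [cancel_at (@nil idx) [I3; I1] I2|].
      exact (pres_eq_app_l [I2] _ _ pres_eq_231). }
  rewrite <- !app_assoc. apply pres_eq_app_l. rewrite app_assoc. apply pres_eq_app_r.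
  replace (-1 - n)%Z with (-1 + - n)%Z by lia.
  exact (zpow_add _ _ pres_eq_inv23 pres_eq_inv32 (-1) (- n)).
Qed.

Lemma nf_coords_spec w : w ≡ (let '(m, n, p) := nf_coords w in nf_word m n p).
Proof.
  induction w as [|i w IH]; [apply pres_refl|].
  simpl. destruct (nf_coords w) as [[m n] p].
  eapply pres_trans; [exact (pres_eq_app_l [i] _ _ IH)|].
  destruct i; [apply nf_word_x1 | apply nf_word_x2 | apply nf_word_x3].
Qed.

Open Scope R_scope.

Lemma edge_dir_nonzero A i : nondegenerate A -> dot (edge_dir A i) (edge_dir A i) <> 0.
Proof.
  intro HD. pose proof (cross_at_vertex A (fst (others i))) as Hc.
  unfold nondegenerate in HD; rewrite <- Hc in HD. pose proof (dot_self_pos_l _ _ HD).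
  destruct i; cbn in *; unfold edge_dir; cbn; lra.
Qed.

Lemma s_invol A i x : nondegenerate A -> s A i (s A i x) = x.
Proof. intro HD. now apply lin_refl_invol, edge_dir_nonzero. Qed.

Lemma s_rot A i t x : nondegenerate A -> s A i (rot t x) = rot (- t) (s A i x).
Proof. intro HD. now apply lin_refl_rot, edge_dir_nonzero. Qed.

Lemma s1_via_s2 A x : nondegenerate A -> s A I1 x = rot (turn A I3) (s A I2 x).
Proof. intro HD. rewrite <- (s_comp A I3) by exact HD. cbn. now rewrite s_invol. Qed.

Lemma s3_via_s2 A x : nondegenerate A -> s A I3 x = rot (- turn A I1) (s A I2 x).
Proof.
  intro HD. rewrite <- s_rot, <- (s_comp A I1) by exact HD. cbn. now rewrite s_invol.
Qed.

Lemma eval_app A u v x : eval A (u ++ v) x = eval A u (eval A v x).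
Proof. induction u; simpl; congruence. Qed.

Lemma eval_relator A r x : nondegenerate A -> In r relators -> eval A r x = x.
Proof.
  intros HD Hr. simpl in Hr.
  destruct Hr as [<-|[<-|[<-|[<-|[]]]]]; cbn; try now apply s_invol.
  rewrite (s_comp A I3), (s_comp A I3), s_rot, s_invol, rot_add by exact HD.
  rewrite Rplus_opp_r. apply rot0.
Qed.

Lemma eval_pres_eq A w1 w2 : nondegenerate A -> pres_eq w1 w2 -> eval A w1 = eval A w2.
Proof.
  intros HD H. induction H; try congruence.
  extensionality x. now rewrite !eval_app, (eval_relator A r).
Qed.

Definition nf_map (A : tri) (m n : Z) (p : bool) (x : point) : point :=
  rot (IZR m * turn A I3 + IZR n * turn A I1) (if p then s A I2 x else x).

Lemma eval_nf_coords A w x : nondegenerate A ->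
  eval A w x = (let '(m, n, p) := nf_coords w in nf_map A m n p x).
Proof.
  intro HD. induction w as [|i w IH].
  - cbn. unfold nf_map. rewrite !Rmult_0_l, Rplus_0_r. now rewrite rot0.
  - cbn [eval fold_right nf_coords]. fold (eval A w). rewrite IH.
    destruct (nf_coords w) as [[m n] p]. unfold nf_map.
    assert (Hp : s A I2 (if p then s A I2 x else x) = if negb p then s A I2 x else x)
      by (destruct p; simpl; auto using s_invol).
    destruct i; [rewrite s1_via_s2 by exact HD | | rewrite s3_via_s2 by exact HD];
      rewrite s_rot, Hp, ?rot_add by exact HD; f_equal; rewrite ?minus_IZR, ?opp_IZR; ring.


Qed.

Lemma sin_turn_sum A : nondegenerate A -> sin (turn A I3 + (turn A I1 + turn A I2)) = 0.
Proof.
  intro HD. rewrite <- (Rminus_0_r (_ + _)). apply sin_sub_eq0_of_rot. intro x.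
  rewrite <- !rot_add, rot0, <- !s_comp by exact HD. cbn. now rewrite !s_invol.
Qed.

Lemma typical_int A z1 z2 z3 : typical A ->
  IZR z1 * angle A I1 + IZR z2 * angle A I2 + IZR z3 * angle A I3 = 0 ->
  z1 = 0%Z /\ z2 = 0%Z /\ z3 = 0%Z.
Proof.
  intros HT H.
  assert (HQ : forall z, Q2R (inject_Z z) = IZR z)
    by (intro z; unfold Q2R, inject_Z; simpl; rewrite Rinv_1; ring).
  destruct (HT (inject_Z z1) (inject_Z z2) (inject_Z z3)) as [H1 [H2 H3]];
    rewrite ?HQ in *; auto.
  repeat split; now apply eq_IZR.
Qed.

Lemma turn_comb_eq0 A m n : nondegenerate A -> typical A ->
  sin (IZR m * turn A I3 + IZR n * turn A I1) = 0 -> m = 0%Z /\ n = 0%Z.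
Proof.
  intros HD HT Hs.
  destruct (sin_eq_0_0 _ (sin_turn_sum A HD)) as [k' Hk'].
  destruct (sin_eq_0_0 _ Hs) as [k Hk].
  assert (Ho : 2 * orientation A <> 0)
    by (unfold orientation, sgn; destruct Rlt_dec; lra).
  unfold turn in *.
  set (a1 := angle A I1) in *. set (a2 := angle A I2) in *. set (a3 := angle A I3) in *.
  assert (Hk'0 : k' <> 0%Z).
  { intros ->. destruct (typical_int A 1 1 1 HT) as [H _]; [|discriminate].
    apply (Rmult_eq_reg_l (2 * orientation A)); [|exact Ho].
    fold a1 a2 a3. rewrite Rmult_0_r, <- (Rmult_0_l PI), <- Hk'. ring. }
  (* Eliminating [PI] between the two relations leaves an integer relation among the angles. *)
  assert (Hrel : IZR (k' * n - k) * a1 + IZR (- k) * a2 + IZR (k' * m - k) * a3 = 0).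
  { apply (Rmult_eq_reg_l (2 * orientation A)); [|exact Ho].
    rewrite !minus_IZR, !mult_IZR, opp_IZR.
    transitivity (IZR k' * (IZR m * (2 * orientation A * a3) + IZR n * (2 * orientation A * a1))
      - IZR k * (2 * orientation A * a3 + (2 * orientation A * a1 + 2 * orientation A * a2)));
      [ring|].
    rewrite Hk, Hk'. ring. }
  destruct (typical_int A _ _ _ HT Hrel) as [H1 [H2 H3]]. nia.
Qed.

Lemma s2_rot_neq_rot A t u : nondegenerate A -> ~ (forall x, rot t (s A I2 x) = rot u x).
Proof.
  intros HD H. apply (lin_refl_neq_rot (edge_dir A I2) (- t + u)); [now apply edge_dir_nonzero|].
  intro y. fold (s A I2 y). rewrite <- rot_add, <- H, rot_add, Rplus_opp_l. now rewrite rot0.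
Qed.

Lemma nf_map_inj A m1 n1 p1 m2 n2 p2 : nondegenerate A -> typical A ->
  (forall x, nf_map A m1 n1 p1 x = nf_map A m2 n2 p2 x) -> (m1, n1, p1) = (m2, n2, p2).
Proof.
  intros HD HT H. unfold nf_map in H.
  assert (Hp : p2 = p1).
  { destruct p1, p2; auto; exfalso; eapply s2_rot_neq_rot; eauto. }
  subst p2.
  assert (Hrot : forall x, rot (IZR m1 * turn A I3 + IZR n1 * turn A I1) x
                         = rot (IZR m2 * turn A I3 + IZR n2 * turn A I1) x).
  { intro x. destruct p1; [rewrite <- (s_invol A I2 x HD)|]; apply H. }
  apply sin_sub_eq0_of_rot in Hrot.
  replace (IZR m1 * turn A I3 + IZR n1 * turn A I1 - (IZR m2 * turn A I3 + IZR n2 * turn A I1))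
    with (IZR (m1 - m2) * turn A I3 + IZR (n1 - n2) * turn A I1) in Hrot
    by (rewrite !minus_IZR; ring).
  destruct (turn_comb_eq0 A _ _ HD HT Hrot). f_equal; f_equal; lia.
Qed.

Lemma pres_eq_of_eval A w1 w2 : nondegenerate A -> typical A ->
  eval A w1 = eval A w2 -> pres_eq w1 w2.
Proof.
  intros HD HT E.
  pose proof (nf_coords_spec w1) as N1. pose proof (nf_coords_spec w2) as N2.
  pose proof (fun x => eval_nf_coords A w1 x HD) as E1.
  pose proof (fun x => eval_nf_coords A w2 x HD) as E2.
  destruct (nf_coords w1) as [[m1 n1] p1], (nf_coords w2) as [[m2 n2] p2].
  assert (Hc : (m1, n1, p1) = (m2, n2, p2)).
  { apply (nf_map_inj A); auto. intro x. now rewrite <- E1, <- E2, E. }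
  injection Hc as -> -> ->. eapply pres_trans; [exact N1 | now apply pres_sym].
Qed.

Theorem proposition3p4 (A : tri) :
  nondegenerate A -> typical A ->
  forall w1 w2 : word, eval A w1 = eval A w2 <-> pres_eq w1 w2.
Proof.
  intros HD HT w1 w2. split.
  - now apply pres_eq_of_eval.
  - now apply eval_pres_eq.
Qed.
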